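(* For a barcode $f$ and any integer $p \ge 1$, $B(f^{\wedge p})$ and $D(f^{\wedge p})$ can be obtained from $C^{\wedge}(f)$: if $f, f'$ are barcodes with $C^{\wedge}(f) = C^{\wedge}(f')$, then $B(f^{\wedge p}) = B(f'^{\wedge p})$ and $D(f^{\wedge p}) = D(f'^{\wedge p})$ for all $p \ge 1$.
   Context: A barcode is a finite formal sum $f = \sum_{i=1}^n x^{\alpha_i}y^{\ell_i}$ with $n\ge0$, $\alpha_i \in \mathbb{R}$, $\ell_i \in \mathbb{R}_{>0}$ (a finite multiset of bars). Its $p$-th exterior power ($p\ge1$) is $f^{\wedge p} = \sum_{1\le i_1<\cdots<i_p\le n} x^{\alpha_{i_1}+\cdots+\alpha_{i_p}}y^{\min\{\ell_{i_1},\ldots,\ell_{i_p}\}}$ (zero if $p>n$). The birth series is $B(f) = \sum_i x^{\alpha_i}$, the death series $D(f) = \sum_i x^{\alpha_i+\ell_i}$, the critical series $C(f) = B(f) - D(f)$ (finite integer combinations of symbols $x^g$, $g\in\mathbb{R}$), and $C^{\wedge}(f) = \sum_{p\ge1} C(f^{\wedge p})z^p$ with $z$ an indeterminate. *)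

From HB Require Import structures.
From mathcomp Require Import all_boot all_order all_algebra.
From mathcomp Require Import reals.
Set Implicit Arguments. Unset Strict Implicit. Unset Printing Implicit Defensive.
Import Order.TTheory GRing.Theory Num.Theory.
Local Open Scope ring_scope.

Section Barcodes.
Variable R : realType.

(* A bar x^alpha y^ell is the pair (alpha, ell); a barcode is a finite
   multiset of bars, represented as a list (order irrelevant for all
   notions below), with all lengths ell > 0. *)
Definition bar := (R * R)%type.
Definition is_barcode (f : seq bar) : bool := all (fun b => 0 < b.2) f.

Fixpoint choose (p : nat) (s : seq bar) : seq (seq bar) :=
  match p, s with
  | 0%N, _ => [:: [::]]
  | p'.+1, [::] => [::]
  | p'.+1, x :: t => map (cons x) (choose p' t) ++ choose p t
  end.

Definition wedge_bar (l : seq bar) : bar :=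
  match l with
  | [::] => (0, 0)
  | x :: t => (x.1 + \sum_(b <- t) b.1, foldr Num.min x.2 (map snd t))
  end.

(* p-th exterior power f^{/\ p} (meaningful for p >= 1; zero if p > n) *)
Definition wedge (p : nat) (f : seq bar) : seq bar := map wedge_bar (choose p f).

(* A finite integer combination of symbols x^g is represented by its
   coefficient function R -> int (finitely supported). *)
Definition series := R -> int.

Definition birth (f : seq bar) : series :=
  fun g => (count (fun b => b.1 == g) f)%:Z.
Definition death (f : seq bar) : series :=
  fun g => (count (fun b => b.1 + b.2 == g) f)%:Z.
Definition crit (f : seq bar) : series := fun g => birth f g - death f g.

(* C^/\(f) = sum_{p>=1} C(f^{/\p}) z^p, as its coefficient sequence in z
   (coefficient of z^0 is 0). *)
Definition crit_wedge (f : seq bar) : nat -> series :=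
  fun p => if p is 0%N then (fun _ => 0) else crit (wedge p f).

End Barcodes.

From Pilot Require Import Defs.
From HB Require Import structures.
From mathcomp Require Import all_boot all_order all_algebra.
From mathcomp Require Import boolp reals.
Import Order.TTheory GRing.Theory Num.Theory.
Local Open Scope ring_scope.
Set Implicit Arguments. Unset Strict Implicit.

(* The births of f^{/\p} are the p-subset sums of the births of f.  Since every
   death exceeds its birth, the least such sum, i.e. the sum of the p smallest
   births, is a point where C(f^{/\p}) is nonzero and below which it vanishes;
   and C(f^{/\p}) = 0 exactly when p exceeds the number of bars.  Hence
   C^{/\}(f) determines the number of bars and all partial sums of the sorted
   births, hence the multiset of births, hence every B(f^{/\p}), and finally
   D(f^{/\p}) = B(f^{/\p}) - C(f^{/\p}). *)

Fixpoint subset_sums (V : nmodType) (p : nat) (s : seq V) : seq V :=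
  match p, s with
  | 0%N, _ => [:: 0]
  | _.+1, [::] => [::]
  | q.+1, x :: t => map (+%R x) (subset_sums q t) ++ subset_sums p t
  end.

Section SubsetSums.
Variable V : nmodType.
Implicit Types (x y : V) (s t : seq V).

Lemma subset_sums0 s : subset_sums 0 s = [:: 0].
Proof. by case: s. Qed.

Lemma subset_sums_oversize p s : (size s < p)%N -> subset_sums p s = [::].
Proof.
by elim: s p => [|x s IH] [|p] //= lt_sp; rewrite (IH p) ?(IH p.+1) // ltnW.
Qed.

Lemma perm_subset_sums_cons x s t :
    (forall p, perm_eq (subset_sums p s) (subset_sums p t)) ->
  forall p, perm_eq (subset_sums p (x :: s)) (subset_sums p (x :: t)).
Proof. by move=> Est [|p] //=; rewrite perm_cat ?perm_map. Qed.

Lemma perm_subset_sums_swap x y s p :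
  perm_eq (subset_sums p (x :: y :: s)) (subset_sums p (y :: x :: s)).
Proof.
case: p => [|[|p]] //=.
  by apply/permP => a /=; rewrite subset_sums0 /= addnCA.
rewrite !map_cat -!catA -!map_comp.
rewrite (@eq_map _ _ (+%R x \o +%R y) (+%R y \o +%R x)) => [|z /=]; last exact: addrCA.
by rewrite perm_cat2l perm_catCA.
Qed.

Lemma perm_subset_sums_move x s t p :
  perm_eq (subset_sums p (s ++ x :: t)) (subset_sums p (x :: s ++ t)).
Proof.
elim: s p => [|y s IH] p //=.
exact: perm_trans (perm_subset_sums_cons y IH p) (perm_subset_sums_swap y x _ p).
Qed.

Lemma perm_subset_sums s t p :
  perm_eq s t -> perm_eq (subset_sums p s) (subset_sums p t).
Proof.
elim: s t p => [|x s IH] t p; first by rewrite perm_sym => /perm_nilP ->.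
move=> Est; have x_t : x \in t by rewrite -(perm_mem Est) mem_head.
move: Est; case/splitPr: x_t => t1 t2.
rewrite perm_sym -[x :: t2]cat1s perm_catCA perm_cons perm_sym => Est.
rewrite perm_sym; apply: perm_trans (perm_subset_sums_move _ _ _ _) _.
by rewrite perm_sym; exact: perm_subset_sums_cons (fun q => IH _ q Est) p.
Qed.

End SubsetSums.

Lemma eq_from_prefix_sums (V : zmodType) (s t : seq V) : size s = size t ->
    (forall p, (p <= size s)%N -> \sum_(z <- take p s) z = \sum_(z <- take p t) z) ->
  s = t.
Proof.
move=> Est Esum; apply: (eq_from_nth (x0 := 0) Est) => i lt_is.
have lt_it : (i < size t)%N by rewrite -Est.
have := Esum i.+1 lt_is.
rewrite (take_nth 0 lt_is) (take_nth 0 lt_it) -!cats1 !big_cat !big_seq1.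
by rewrite (Esum i (ltnW lt_is)) => /addrI.
Qed.

Section LeastSubsetSum.
Variable R : realDomainType.
Implicit Types (s : seq R).

Definition least_sum p s : R := \sum_(z <- take p (sort <=%R s)) z.

Lemma sorted_take_sum_le s p y : sorted <=%R s ->
  y \in subset_sums p s -> \sum_(z <- take p s) z <= y.
Proof.
elim: s p y => [|x s IH] [|p] y sorted_xs /=;
  rewrite ?subset_sums0 ?take0 ?big_nil ?mem_seq1 //; try by move/eqP ->.
have sorted_s := path_sorted sorted_xs.
rewrite mem_cat => /orP [/mapP [z z_in ->] | y_in].
  by rewrite big_cons lerD2l IH.
have lt_ps : (p < size s)%N.
  by rewrite ltnNge; apply: contraTN y_in => le_sp; rewrite subset_sums_oversize.
apply: le_trans (IH _ _ sorted_s y_in).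
rewrite big_cons (take_nth 0 lt_ps) -cats1 big_cat big_seq1 addrC lerD2l.
by apply: (allP (order_path_min le_trans sorted_xs)); exact: mem_nth.
Qed.

Lemma take_sum_mem s p : (p <= size s)%N ->
  \sum_(z <- take p s) z \in subset_sums p s.
Proof.
elim: s p => [|x s IH] [|p] //= le_ps; rewrite ?take0 ?big_nil ?mem_head //.
by rewrite big_cons mem_cat map_f ?IH.
Qed.

Lemma perm_subset_sums_sort s p :
  perm_eq (subset_sums p s) (subset_sums p (sort <=%R s)).
Proof. by apply: perm_subset_sums; rewrite perm_sym perm_sort. Qed.

Lemma least_sum_le s p y : y \in subset_sums p s -> least_sum p s <= y.
Proof.
rewrite (perm_mem (perm_subset_sums_sort s p)).
by apply: sorted_take_sum_le; apply: sort_sorted; exact: le_total.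
Qed.

Lemma least_sum_mem s p : (p <= size s)%N -> least_sum p s \in subset_sums p s.
Proof.
by move=> le_ps; rewrite (perm_mem (perm_subset_sums_sort s p)) take_sum_mem ?size_sort.
Qed.

End LeastSubsetSum.

Lemma nonzero_least_unique (d : Order.disp_t) (T : orderType d) (M : zmodType) (c : T -> M) a b :
    c a != 0 -> c b != 0 ->
    (forall g, (g < a)%O -> c g = 0) -> (forall g, (g < b)%O -> c g = 0) ->
  a = b.
Proof.
move=> nz_a nz_b vanish_a vanish_b.
case: (ltgtP a b) => // [/vanish_b | /vanish_a] E; [by rewrite E eqxx in nz_a|].
by rewrite E eqxx in nz_b.
Qed.

Section Barcodes.
Variable R : realType.
Implicit Types (f h s l : seq (bar R)).

Lemma deathE h g : death h g = birth h g - crit h g.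
Proof. by rewrite /crit opprB addrC subrK. Qed.

Lemma birth_lt_births h g : (forall b, b \in h -> g < b.1) -> birth h g = 0.
Proof.
move=> lt_g; rewrite /birth (eq_in_count (a2 := pred0)) ?count_pred0 // => b b_in.
by rewrite gt_eqF ?lt_g.
Qed.

Lemma death_le_births h g : is_barcode h ->
  (forall b, b \in h -> g <= b.1) -> death h g = 0.
Proof.
move=> h_bar le_g; rewrite /death (eq_in_count (a2 := pred0)) ?count_pred0 // => b b_in.
by rewrite gt_eqF // (le_lt_trans (le_g b b_in)) // ltrDl (allP h_bar).
Qed.

Lemma mem_choose p s l : l \in Defs.choose p s -> size l = p /\ {subset l <= s}.
Proof.
elim: s p l => [|x s IH] [|p] l //=; rewrite ?mem_seq1 ?mem_cat; try by move/eqP ->.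
case/orP => [/mapP [l' /IH [size_l' sub_l'] ->] | /IH [-> sub_l]] /=.
  by split=> [|z]; rewrite ?size_l' // !inE => /orP [-> // | /sub_l' ->]; rewrite orbT.
by split=> // z /sub_l z_s; rewrite inE z_s orbT.
Qed.

Lemma wedge_births f p : map fst (wedge p f) = subset_sums p (map fst f).
Proof.
have fst_wedge_bar l : (wedge_bar l).1 = \sum_(b <- l) b.1.
  by case: l => [|b l] /=; rewrite ?big_nil ?big_cons.
rewrite /wedge -map_comp (eq_map fst_wedge_bar).
elim: f p => [|b f IH] [|p] //=; rewrite ?subset_sums0 /= ?big_nil //.
rewrite map_cat -!IH -!map_comp; congr (_ ++ _).
by apply: eq_map => l /=; rewrite big_cons.
Qed.

Lemma wedge_barcode f p : is_barcode f -> (0 < p)%N -> is_barcode (wedge p f).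
Proof.
have foldr_min_gt0 (x : R) (s : seq R) : 0 < x -> all (> 0) s -> 0 < foldr Num.min x s.
  by move=> x_gt0; elim: s => //= y s IH /andP [y_gt0 /IH]; rewrite lt_min y_gt0.
move=> f_bar p_gt0; apply/allP => _ /mapP [l /mem_choose [size_l sub_l] ->].
have : is_barcode l by apply/allP => b /sub_l; exact: (allP f_bar).
case: l size_l {sub_l} => [p0 | b l _] /=; first by rewrite -p0 in p_gt0.
by case/andP => b_gt0 l_bar; rewrite foldr_min_gt0 // all_map.
Qed.

Lemma birth_wedge f p g :
  birth (wedge p f) g = (count (pred1 g) (subset_sums p (map fst f)))%:Z.
Proof. by rewrite -wedge_births count_map. Qed.

Lemma perm_birth_wedge f f' p : perm_eq (map fst f) (map fst f') ->
  birth (wedge p f) = birth (wedge p f').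
Proof.
move=> /(perm_subset_sums p) /permP E; apply: funext => g.
by rewrite !birth_wedge E.
Qed.

Lemma wedge_oversize f p : (size f < p)%N -> wedge p f = [::].
Proof.
move=> lt_fp; apply: size0nil.
by rewrite -(size_map fst) wedge_births subset_sums_oversize ?size_map.
Qed.

Lemma least_sum_le_wedge f p b :
  b \in wedge p f -> least_sum p (map fst f) <= b.1.
Proof. by move=> b_in; apply: least_sum_le; rewrite -wedge_births map_f. Qed.

Lemma crit_wedge_lt_least_sum f p g : is_barcode f -> (0 < p)%N ->
  g < least_sum p (map fst f) -> crit (wedge p f) g = 0.
Proof.
move=> f_bar p_gt0 lt_g; rewrite /crit (death_le_births (wedge_barcode f_bar p_gt0)).
  by rewrite birth_lt_births // => b /least_sum_le_wedge; exact: lt_le_trans.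
by move=> b /least_sum_le_wedge; apply: le_trans; exact: ltW.
Qed.

Lemma crit_wedge_least_sum f p : is_barcode f -> (0 < p <= size f)%N ->
  crit (wedge p f) (least_sum p (map fst f)) != 0.
Proof.
move=> f_bar /andP [p_gt0 le_pf].
rewrite /crit (death_le_births (wedge_barcode f_bar p_gt0)) => [|b]; last first.
  exact: least_sum_le_wedge.
rewrite subr0 birth_wedge eqz_nat -lt0n -has_count.
by apply/hasP; exists (least_sum p (map fst f)); rewrite ?least_sum_mem ?size_map /=.
Qed.

Lemma eq_crit_wedge f f' p : crit_wedge f = crit_wedge f' -> (0 < p)%N ->
  crit (wedge p f) = crit (wedge p f').
Proof. by case: p => // p /(congr1 (fun F => F p.+1)). Qed.

Lemma crit_wedge_size_le f f' : is_barcode f -> crit_wedge f = crit_wedge f' ->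
  (size f <= size f')%N.
Proof.
move=> f_bar Ecrit; rewrite leqNgt; apply/negP => lt_f'f.
have p_gt0 : (0 < size f)%N by apply: leq_ltn_trans lt_f'f.
have := @crit_wedge_least_sum f (size f) f_bar; rewrite p_gt0 leqnn => /(_ isT).
by rewrite (eq_crit_wedge Ecrit p_gt0) wedge_oversize.
Qed.

Lemma crit_wedge_eq_least_sum f f' p : is_barcode f -> is_barcode f' ->
    crit_wedge f = crit_wedge f' -> (p <= size f)%N -> (p <= size f')%N ->
  least_sum p (map fst f) = least_sum p (map fst f').
Proof.
move=> f_bar f'_bar Ecrit le_pf le_pf'.
case: (posnP p) => [-> | p_gt0]; first by rewrite /least_sum !take0 !big_nil.
apply: (nonzero_least_unique (c := crit (wedge p f))).
- by apply: crit_wedge_least_sum; rewrite ?p_gt0.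
- by rewrite (eq_crit_wedge Ecrit p_gt0) crit_wedge_least_sum ?p_gt0.
- by move=> g; exact: crit_wedge_lt_least_sum.
- by move=> g /(crit_wedge_lt_least_sum f'_bar p_gt0); rewrite (eq_crit_wedge Ecrit p_gt0).
Qed.

Lemma crit_wedge_perm_births f f' : is_barcode f -> is_barcode f' ->
  crit_wedge f = crit_wedge f' -> perm_eq (map fst f) (map fst f').
Proof.
move=> f_bar f'_bar Ecrit.
have Esize : size f = size f'.
  by apply/eqP; rewrite eqn_leq !crit_wedge_size_le.
apply/(perm_sortP le_total le_trans le_anti); apply: eq_from_prefix_sums.
  by rewrite !size_sort !size_map.
move=> p; rewrite size_sort size_map => le_pf.
by apply: crit_wedge_eq_least_sum; rewrite -?Esize.
Qed.

End Barcodes.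

Theorem proposition13 (R : realType) (f f' : seq (R * R)%type) :
  is_barcode f -> is_barcode f' ->
  crit_wedge f = crit_wedge f' ->
  forall p : nat, (1 <= p)%N ->
    birth (wedge p f) = birth (wedge p f') /\
    death (wedge p f) = death (wedge p f').
Proof.
move=> f_bar f'_bar Ecrit p p_gt0.
have Ebirth := perm_birth_wedge p (crit_wedge_perm_births f_bar f'_bar Ecrit).
split=> //; apply: funext => g.
by rewrite !deathE Ebirth (eq_crit_wedge Ecrit p_gt0).
Qed.
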